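(* Let $n\ge3$ be an odd integer. The cycle $C_n$ admits an optimal extended irregular dominating set if and only if there exists a strong starter in $\mathbb{Z}_n$.
   Context: $C_n$ is the cycle on $n$ vertices. In a finite simple graph $\Gamma=(V,E)$ with distance $d$, a vertex $v$ carrying a non-negative integer label $\ell$ dominates (covers) exactly the vertices $u$ with $d(u,v)=\ell$; a vertex labeled $0$ dominates only itself. For $k\ge0$, a $k$-extended irregular dominating set is a set $S\subseteq V$ of $k$ vertices with a labeling $\lambda:S\to\mathbb{Z}_{\ge0}$ with distinct labels, such that every vertex of $V$ is dominated by some vertex of $S$; it is assumed that some vertex of $S$ has label $0$. $\gamma_e(\Gamma)$ is the minimum cardinality of such a set; a $k$-extended irregular dominating set is optimal if $k=\gamma_e(\Gamma)$. For an additive abelian group $G$ of odd order $g$, a starter is a set of unordered pairs $\{\{x_i,y_i\}:1\le i\le (g-1)/2\}$ such that $\{x_i,y_i: 1\le i\le (g-1)/2\}=G\setminus\{0\}$ and $\{\pm(x_i-y_i):1\le i\le (g-1)/2\}=G\setminus\{0\}$; it is strong if moreover the sums $x_i+y_i$ are pairwise distinct and all nonzero. *)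

From mathcomp Require Import all_boot all_order all_algebra.
Set Implicit Arguments. Unset Strict Implicit. Unset Printing Implicit Defensive.
Import GRing.Theory.

(* The cycle C_n on vertex set 'I_n = {0,...,n-1}, vertex i adjacent to
   i+1 mod n.  Its graph distance is the cyclic distance
   d(u,v) = min((u - v) mod n, (v - u) mod n). *)
Definition cycle_dist (n : nat) (u v : 'I_n) : nat :=
  minn ((u + n - v) %% n) ((v + n - u) %% n).

Definition dominates (n : nat) (lam : 'I_n -> nat) (v u : 'I_n) : bool :=
  cycle_dist u v == lam v.

Definition is_eids (n : nat) (S : {set 'I_n}) (lam : 'I_n -> nat) : Prop :=
  {in S &, injective lam} /\
  (exists2 v, v \in S & lam v = 0%N) /\
  (forall u : 'I_n, exists2 v, v \in S & dominates lam v u).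

Definition optimal_eids (n : nat) (S : {set 'I_n}) (lam : 'I_n -> nat) : Prop :=
  is_eids S lam /\
  (forall (S' : {set 'I_n}) (lam' : 'I_n -> nat), is_eids S' lam' -> #|S| <= #|S'|).

(* A starter in Z_n (n odd): pairs {x i, y i}, i < (n-1)/2. *)
Definition starter (n : nat) (x y : 'I_(n.-1./2) -> 'Z_n) : Prop :=
  [set z | [exists i, (z == x i) || (z == y i)]] = [set~ 0%R] /\
  [set z | [exists i, (z == x i - y i)%R || (z == y i - x i)%R]] = [set~ 0%R].

Definition strong_starter (n : nat) (x y : 'I_(n.-1./2) -> 'Z_n) : Prop :=
  starter x y /\ injective (fun i => (x i + y i)%R) /\
  (forall i, (x i + y i)%R != 0%R).

From mathcomp Require Import all_boot all_order all_algebra zify ring.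
Set Implicit Arguments. Unset Strict Implicit. Unset Printing Implicit Defensive.
Import GRing.Theory.
Local Open Scope ring_scope.

(* Write n = 2m + 1 and |z| for the cyclic norm on Z_n, so that d(u, v) = |u - v|.
   In an extended irregular dominating set (S, lam) every vertex u has a
   dominator D u in S with lam (D u) = |u - D u|.  As lam is injective on S,
   the offset map u |-> u - D u is injective, hence a bijection of Z_n: every
   norm 0..m is a label (so |S| >= m + 1), and the dominator V z of offset z
   satisfies V (-z) = V z while W z := V z + z is a bijection.  If u0 is the
   vertex labelled 0, the pairs {W (-c) - u0, W c - u0}, c = 1..m, have
   differences +-2c and sums 2 (V c - u0), so they form a strong starter.
   Conversely, for a strong starter {x_i, y_i} the midpoint (x_i + y_i)/2,
   labelled |(y_i - x_i)/2|, dominates x_i and y_i; these labels are distinct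
   because the differences of a starter are, so {0} together with the m
   midpoints is a dominating set of the optimal size m + 1. *)

Section OddCycle.

Variable k : nat.
Hypothesis k_odd : odd k.
Local Notation n := k.+2.
Local Notation m := (k.+1)./2.
Local Notation Z := 'I_n.

Definition cnorm (z : Z) : nat := minn z (- z : Z).

Lemma val_subZp (u v : Z) : nat_of_ord (u - v) = ((u + n - v) %% n)%N.
Proof. by rewrite /= modnDmr addnBA // ltnW. Qed.

Lemma cycle_distE (u v : Z) : cycle_dist u v = cnorm (u - v).
Proof. by rewrite /cnorm opprB !val_subZp. Qed.

Lemma cnormN (z : Z) : cnorm (- z) = cnorm z.
Proof. by rewrite /cnorm opprK minnC. Qed.

Lemma cnorm0 : cnorm 0 = 0%N.
Proof. by rewrite /cnorm oppr0. Qed.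

Lemma cnormE (z : Z) : z = (cnorm z)%:R \/ z = - (cnorm z)%:R.
Proof. by rewrite /cnorm /minn; case: ifP => _; [left | right]; rewrite natr_Zp ?opprK. Qed.

Lemma cnorm_eq0 (z : Z) : cnorm z = 0%N -> z = 0.
Proof. by move=> z0; case: (cnormE z); rewrite z0 => ->; rewrite ?oppr0. Qed.

Lemma eq_cnorm (a b : Z) : cnorm a = cnorm b -> a = b \/ a = - b.
Proof. by move=> eab; case: (cnormE a) => ->; case: (cnormE b) => ->; rewrite eab ?opprK; tauto. Qed.

Lemma n_double_half : n = m.*2.+1.
Proof. by have := odd_double_half k.+1; rewrite /= k_odd add0n => ->. Qed.

Lemma val_oppZp (z : Z) : nat_of_ord z != 0%N -> nat_of_ord (- z) = (n - z)%N.
Proof. by move=> z0; rewrite /= modn_small //; have := ltn_ord z; lia. Qed.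

Lemma cnorm_le_half (z : Z) : (cnorm z <= m)%N.
Proof.
rewrite /cnorm; case: (eqVneq (nat_of_ord z) 0%N) => [-> | z0]; first by rewrite min0n.
by rewrite val_oppZp //; have := ltn_ord z; have := n_double_half; lia.
Qed.

Lemma cnorm_natr (l : nat) : (l <= m)%N -> cnorm l%:R = l.
Proof.
move=> lm; have vl : nat_of_ord (l%:R : Z) = l.
  by rewrite Zp_nat /= modn_small //; have := n_double_half; lia.
have [-> | l0] := eqVneq l 0%N; first exact: cnorm0.
by rewrite /cnorm val_oppZp vl //; have := n_double_half; lia.
Qed.

Lemma two_unit : (2%:R : Z) \is a GRing.unit.
Proof. by have := @unitZpE n 2 isT; rewrite coprimen2 /= k_odd. Qed.

Definition pos_of_ord (i : 'I_m) : Z := i.+1%:R.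

Lemma cnorm_pos_of_ord (i : 'I_m) : cnorm (pos_of_ord i) = i.+1.
Proof. exact: cnorm_natr. Qed.

Lemma pos_of_ord_neq0 (i : 'I_m) : pos_of_ord i != 0.
Proof. by apply/eqP => /(congr1 cnorm); rewrite cnorm_pos_of_ord cnorm0. Qed.

Lemma neq0_pos_of_ord (z : Z) :
  z != 0 -> exists i, z = - pos_of_ord i \/ z = pos_of_ord i.
Proof.
move=> z0; have z_pos : (0 < cnorm z)%N.
  by rewrite lt0n; apply: contra z0 => /eqP /cnorm_eq0 ->.
have lt_m : ((cnorm z).-1 < m)%N by have := cnorm_le_half z; lia.
exists (Ordinal lt_m); rewrite /pos_of_ord /= prednK //.
by case: (cnormE z); tauto.
Qed.

Lemma signed_pairs_cover (f : Z -> Z) (x y : 'I_m -> Z) :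
    injective f -> f 0 = 0 ->
    (forall i, x i = f (- pos_of_ord i)) -> (forall i, y i = f (pos_of_ord i)) ->
  [set z | [exists i, (z == x i) || (z == y i)]] = [set~ 0].
Proof.
move=> f_inj f0 xE yE; apply/setP => z; rewrite !inE; apply/existsP/idP.
  case=> i /orP[] /eqP ->;
    by rewrite ?xE ?yE -f0 (inj_eq f_inj) ?oppr_eq0 pos_of_ord_neq0.
have [g fK gK] := injF_bij f_inj.
move=> z0; have gz0 : g z != 0 by apply: contra z0 => /eqP gz; rewrite -[z]gK gz f0.
have [i [giE | giE]] := neq0_pos_of_ord gz0; exists i.
  by rewrite xE -giE gK eqxx.
by rewrite yE -giE gK eqxx orbT.
Qed.

Lemma starter_diff_inj (x y : 'I_m -> Z) : @starter n x y ->
  injective (fun p : 'I_m * bool => if p.2 then x p.1 - y p.1 else y p.1 - x p.1).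
Proof.
case=> _ diffs; set F := fun p : 'I_m * bool => _.
have imF : F @: setT = [set~ 0].
  apply/setP => z; rewrite -diffs inE; apply/imsetP/existsP.
    by case=> [[i b]] _ ->; exists i; case: b; rewrite /F /= eqxx ?orbT.
  by case=> i /orP[] /eqP ->; [exists (i, true) | exists (i, false)].
have /imset_injP F_inj : #|F @: setT| == #|[set: 'I_m * bool]|.
  rewrite imF cardsC1 cardsT card_prod card_ord card_bool card_ord.
  by apply/eqP; have := n_double_half; lia.
by move=> p q; apply: F_inj; rewrite inE.
Qed.

Lemma eids_offset_bijection (S : {set Z}) (lam : Z -> nat) : is_eids S lam ->
  exists V : Z -> Z,
    (forall z, V z \in S /\ lam (V z) = cnorm z) /\ bijective (fun z => V z + z).
Proof.
case=> lam_inj [_ dom].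
have /fin_all_exists [D hD] : forall u : Z, exists v, v \in S /\ lam v = cnorm (u - v).
  by move=> u; have [v vS /eqP luv] := dom u; exists v; rewrite -luv cycle_distE.
pose h u := u - D u.
have h_inj : injective h.
  move=> u u' huu'; have [Su lu] := hD u; have [Su' lu'] := hD u'.
  have Duu' : D u = D u' by apply: lam_inj; rewrite // lu lu'; congr cnorm.
  by move: huu'; rewrite /h Duu' => /addIr.
have [g hK gK] := injF_bij h_inj.
have DgE z : D (g z) + z = g z by rewrite -{2}(gK z) /h addrC subrK.
exists (fun z => D (g z)); split.
  by move=> z; have [Sz lz] := hD (g z); rewrite lz -/(h (g z)) gK.
by exists h => z; rewrite DgE ?gK ?hK.
Qed.

Lemma eids_card_ge (S : {set Z}) (lam : Z -> nat) : is_eids S lam -> (m.+1 <= #|S|)%N.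
Proof.
move=> /eids_offset_bijection [V [V_spec _]].
pose f (j : 'I_m.+1) : Z := V (j : nat)%:R.
have lam_f (j : 'I_m.+1) : lam (f j) = j by rewrite (V_spec _).2 cnorm_natr // -ltnS.
have f_inj : injective f by move=> i j /(congr1 lam); rewrite !lam_f => /val_inj.
have <- : #|f @: [set: 'I_m.+1]| = m.+1 by rewrite card_imset // cardsT card_ord.
by apply/subset_leq_card/subsetP => v /imsetP [j _ ->]; exact: (V_spec _).1.
Qed.

Lemma strong_starter_of_eids (S : {set Z}) (lam : Z -> nat) :
  is_eids S lam -> exists x y : 'I_m -> Z, @strong_starter n x y.
Proof.
move=> eids; have [V [V_spec /bij_inj W_inj]] := eids_offset_bijection eids.
case: eids => lam_inj [[u0 u0S lu0] _].
have V_cnorm a b : cnorm a = cnorm b -> V a = V b.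
  by move=> eab; apply: lam_inj; rewrite ?(V_spec _).1 // !(V_spec _).2.
have V0 : V 0 = u0 by apply: lam_inj; rewrite ?(V_spec _).1 // (V_spec _).2 cnorm0.
pose c := pos_of_ord.
have Vc_inj : injective (fun i => V (c i)).
  by move=> i j /(congr1 lam); rewrite !(V_spec _).2 !cnorm_pos_of_ord => -[] /val_inj.
have sumE i : (V (c i) - c i - u0) + (V (c i) + c i - u0) = (V (c i) - u0) * 2%:R.
  by ring.
exists (fun i => V (c i) - c i - u0), (fun i => V (c i) + c i - u0).
split; [split | split].
- apply: (@signed_pairs_cover (fun z => V z + z - u0)) => [a b /addIr /W_inj //||i|//].
    by rewrite V0 addr0 subrr.
  by rewrite (V_cnorm (- c i) (c i)) ?cnormN.
- by apply: (@signed_pairs_cover (fun z => z * 2%:R)) => [||i|i];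
    [exact: mulIr two_unit | rewrite mul0r | ring | ring].
- by move=> i j /=; rewrite !sumE => /(mulIr two_unit) /addIr /Vc_inj.
- move=> i; rewrite sumE -(mul0r 2%:R) (inj_eq (mulIr two_unit)) subr_eq0.
  by apply/eqP => /(congr1 lam); rewrite (V_spec _).2 lu0 cnorm_pos_of_ord.
Qed.

Section StarterEids.

Variables x y : 'I_m -> Z.
Hypothesis xy_strong : @strong_starter n x y.

Definition half_gap (i : 'I_m) : Z := (y i - x i) / 2%:R.

Definition center (i : 'I_m) : Z := x i + half_gap i.

Definition center_label (u : Z) : nat :=
  if [pick i | center i == u] is Some i then cnorm (half_gap i) else 0%N.

Definition starter_set : {set Z} := 0 |: [set center i | i : 'I_m].

Lemma half_gapK (i : 'I_m) : half_gap i * 2%:R = y i - x i.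
Proof. exact: (divrK two_unit). Qed.

Lemma centerE (i : 'I_m) : center i * 2%:R = x i + y i.
Proof. by rewrite mulrDl half_gapK; ring. Qed.

Lemma x_sub_center (i : 'I_m) : x i - center i = - half_gap i.
Proof. by rewrite /center; ring. Qed.

Lemma y_sub_center (i : 'I_m) : y i - center i = half_gap i.
Proof. by rewrite -[y i](subrK (x i)) -half_gapK /center -/(half_gap i); ring. Qed.

Lemma center_inj : injective center.
Proof.
have [_ [sum_inj _]] := xy_strong.
by move=> i j cij; apply: sum_inj; rewrite /= -!centerE cij.
Qed.

Lemma center_neq0 (i : 'I_m) : center i != 0.
Proof.
have [_ [_ sum_neq0]] := xy_strong.
by apply: contra (sum_neq0 i) => /eqP ci0; rewrite /= -centerE ci0 mul0r.
Qed.

Lemma half_gap_cnorm_neq0 (i : 'I_m) : cnorm (half_gap i) != 0%N.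
Proof.
have [[_ diffs] _] := xy_strong.
have : y i - x i \in [set~ 0].
  by rewrite -diffs inE; apply/existsP; exists i; rewrite eqxx orbT.
rewrite !inE -half_gapK; apply: contra => /eqP /cnorm_eq0 ->.
by rewrite mul0r.
Qed.

Lemma half_gap_cnorm_inj : injective (fun i => cnorm (half_gap i)).
Proof.
have [xy_starter _] := xy_strong.
have diff_inj := starter_diff_inj xy_starter.
move=> i j /eq_cnorm [] gij.
  apply: (congr1 fst (diff_inj (i, false) (j, false) _)).
  by rewrite /= -!half_gapK gij.
apply: (congr1 fst (diff_inj (i, false) (j, true) _)).
by rewrite /= -half_gapK gij mulNr half_gapK opprB.
Qed.

Lemma center_labelE (i : 'I_m) : center_label (center i) = cnorm (half_gap i).
Proof.
rewrite /center_label; case: pickP => [j /eqP /center_inj -> // | none].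
by have := none i; rewrite eqxx.
Qed.

Lemma center_label0 : center_label 0 = 0%N.
Proof.
rewrite /center_label; case: pickP => [j /eqP cj0 | //].
by have := center_neq0 j; rewrite cj0 eqxx.
Qed.

Lemma starter_eids : is_eids starter_set center_label.
Proof.
have [[elts _] _] := xy_strong.
split; last split.
- move=> a b; rewrite !inE.
  move=> /predU1P [-> | /imsetP [i _ ->]] /predU1P [-> | /imsetP [j _ ->]] //.
  + rewrite center_label0 center_labelE => lj.
    by have := half_gap_cnorm_neq0 j; rewrite -lj eqxx.
  + rewrite center_label0 center_labelE => li.
    by have := half_gap_cnorm_neq0 i; rewrite li eqxx.
  + by rewrite !center_labelE => /half_gap_cnorm_inj ->.
- by exists 0; [rewrite setU11 | exact: center_label0].
move=> u; have [-> | u0] := eqVneq u 0.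
  by exists 0; rewrite ?setU11 // /dominates center_label0 cycle_distE subrr cnorm0.
have : u \in [set~ 0] by rewrite !inE.
rewrite -elts inE => /existsP [i /orP[] /eqP ->]; exists (center i);
  rewrite ?inE ?imset_f ?orbT // /dominates center_labelE cycle_distE.
  by rewrite x_sub_center cnormN.
by rewrite y_sub_center.
Qed.

Lemma card_starter_set : (#|starter_set| <= m.+1)%N.
Proof.
rewrite cardsU1 -[m.+1]add1n leq_add ?leq_b1 //.
by apply: leq_trans (leq_imset_card _ _) _; rewrite card_ord.
Qed.

End StarterEids.

End OddCycle.

Local Close Scope ring_scope.

Theorem proposition4p5 (n : nat) :
  odd n -> 3 <= n ->
  (exists (S : {set 'I_n}) (lam : 'I_n -> nat), optimal_eids S lam) <->
  (exists x y : 'I_(n.-1./2) -> 'Z_n, strong_starter x y).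
Proof.
case: n => [|[|k]] //= k_odd _; rewrite negbK in k_odd.
split=> [[S [lam [eids _]]] | [x [y xy_strong]]].
  exact (strong_starter_of_eids k_odd eids).
exists (starter_set x y), (center_label x y).
split=> [|S' lam' eids']; first exact: starter_eids.
exact: leq_trans (card_starter_set _ _) (eids_card_ge k_odd eids').
Qed.
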